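(* For each $n\ge0$, the $n$-dimensional simplex $\Delta^n=\{w\colon\{0,\dots,n\}\to[0,1]\mid \sum_i w(i)=1\}$ with midpoint operation $m(w,w')=\tfrac{w+w'}{2}$ (pointwise) and insertion of generators $i\mapsto\delta_i$ (the vertices) is the free m-convex body in the category of sets over the set $\{0,\dots,n\}$: for every m-convex body $(A,m_A)$ in sets and every function $f\colon\{0,\dots,n\}\to A$ there is a unique midpoint homomorphism $h\colon\Delta^n\to A$ with $h(\delta_i)=f(i)$ for all $i$.
   Context: A midpoint set is a set $A$ with $m_A\colon A\times A\to A$ satisfying $m_A(x,x)=x$, $m_A(x,y)=m_A(y,x)$, $m_A(m_A(x,y),m_A(z,w))=m_A(m_A(x,z),m_A(y,w))$. It is cancellative if $m_A(x,y)=m_A(x,z)$ implies $y=z$, and iterative if for every set $X$ and functions $h\colon X\to A$, $t\colon X\to X$ there is a unique $u\colon X\to A$ with $u(x)=m_A(h(x),u(t(x)))$. An m-convex body is a cancellative iterative midpoint set; homomorphisms preserve the midpoint operation. $\delta_i$ is the function with value $1$ at $i$ and $0$ elsewhere. *)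

From Stdlib Require Import Rdefinitions.
From HB Require Import structures.
From mathcomp Require Import all_boot all_order all_algebra.
From mathcomp Require Import Rstruct.

Set Implicit Arguments. Unset Strict Implicit. Unset Printing Implicit Defensive.
Import Order.TTheory GRing.Theory Num.Theory.
Local Open Scope ring_scope.

Definition is_midpoint_set (A : Type) (m : A -> A -> A) : Prop :=
  (forall x, m x x = x) /\
  (forall x y, m x y = m y x) /\
  (forall x y z w, m (m x y) (m z w) = m (m x z) (m y w)).

Definition cancellative (A : Type) (m : A -> A -> A) : Prop :=
  forall x y z, m x y = m x z -> y = z.

Definition iterative (A : Type) (m : A -> A -> A) : Prop :=
  forall (X : Type) (h : X -> A) (t : X -> X),
    exists! u : X -> A, forall x, u x = m (h x) (u (t x)).

Definition m_convex_body (A : Type) (m : A -> A -> A) : Prop :=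
  is_midpoint_set m /\ cancellative m /\ iterative m.

Definition midpoint_hom (A B : Type) (mA : A -> A -> A) (mB : B -> B -> B)
  (h : A -> B) : Prop :=
  forall x y, h (mA x y) = mB (h x) (h y).

Definition in_simplex (n : nat) (w : 'I_n.+1 -> R) : Prop :=
  (forall i, 0 <= w i <= 1) /\ \sum_(i < n.+1) w i = 1.

Definition simplex (n : nat) := {w : 'I_n.+1 -> R | in_simplex w}.

Lemma mid_in_simplex (n : nat) (w w' : 'I_n.+1 -> R) :
  in_simplex w -> in_simplex w' -> in_simplex (fun i => (w i + w' i) / 2).
Proof.
move=> [Hw Sw] [Hw' Sw']; split.
- move=> i; have /andP[a b] := Hw i; have /andP[c d] := Hw' i.
  apply/andP; split.
  + by apply: divr_ge0 => //; apply: addr_ge0.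
  + rewrite ler_pdivrMr ?ltr0n // mul1r.
    by rewrite -[2%:R]/(1 + 1); apply: lerD.
- rewrite -mulr_suml big_split /= Sw Sw'.
  by rewrite -mulr2n divff // pnatr_eq0.
Qed.

Definition simplex_mid (n : nat) (x y : simplex n) : simplex n :=
  exist _ (fun i => (proj1_sig x i + proj1_sig y i) / 2)
    (mid_in_simplex (proj2_sig x) (proj2_sig y)).

Definition delta (n : nat) (i : 'I_n.+1) : 'I_n.+1 -> R :=
  fun j => if j == i then 1 else 0.

Lemma delta_in_simplex (n : nat) (i : 'I_n.+1) : in_simplex (delta i).
Proof.
split.
- by move=> j; rewrite /delta; case: (j == i); rewrite ?lexx ?ler01.
- rewrite (bigD1 i) //= /delta eqxx big1 ?addr0 //.
  by move=> j /negbTE ->.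
Qed.

Definition vertex (n : nat) (i : 'I_n.+1) : simplex n :=
  exist _ (delta i) (delta_in_simplex i).

From Stdlib Require Import Rdefinitions.
From Stdlib Require Raxioms.
From Stdlib Require Import ProofIrrelevance FunctionalExtensionality ClassicalEpsilon.
From mathcomp Require Import all_boot all_order all_algebra.
From mathcomp Require Import Rstruct zify ring lra.
Set Implicit Arguments. Unset Strict Implicit. Unset Printing Implicit Defensive.
Import Order.TTheory GRing.Theory Num.Theory.
Local Open Scope ring_scope.

(* The simplex is an m-convex body: u x = (h x + u (t x)) / 2 is solved coordinatewise by
   u x = sum_k h (t^k x) / 2^(k+1), the only bounded solution.

   Every w is the midpoint of digit w, a dyadic point of level n below 2 w, and
   rest w = 2 w - digit w.  A dyadic point, viewed as a multiset of 2^N vertices, is sent to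
   the balanced tree of midpoints of their images in A; by the medial law this does not depend
   on the order of the vertices nor on N.  Iterativity of A then defines h by
   h w = mid (eval (digit w), h (rest w)).  The key step is h (mid d w) = mid (eval d, h w)
   for d dyadic of level n+1: whenever mid d1 w1 = mid d2 w2, the two functions
   mid (eval d_k, h w_k) solve the same iteration equation, because 2 d1 + digit w1 and
   2 d2 + digit w2 share a dyadic part of two thirds of their mass, so uniqueness makes them
   equal.  The homomorphism property and h (vertex i) = f i follow, and any homomorphism
   agrees with eval on dyadic points, hence solves the equation defining h. *)

Lemma exp2N_gt0 K : 0 < 2 ^- K :> R.
Proof. by rewrite invr_gt0 exprn_gt0. Qed.

Lemma exp2NS K : 2 ^- K = 2 * 2 ^- K.+1 :> R.
Proof. by rewrite exprS invfM mulrA divff ?mul1r // pnatr_eq0. Qed.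

Lemma exp2N_lt (e : R) : 0 < e -> exists K, 2 ^- K < e.
Proof.
move=> e_gt0; set k := Num.truncn e^-1; exists k.+1.
have lt_trunc : e^-1 < k.+1%:R by apply: truncnS_gt.
have lt_exp : (k.+1%:R : R) < 2 ^+ k.+1 by rewrite -natrX ltr_nat ltn_expl.
rewrite -[e]invrK ltf_pV2 ?posrE ?invr_gt0 ?exprn_gt0 //.
exact: lt_trans lt_trunc lt_exp.
Qed.

Lemma eq_of_dist_le_exp2N (a b B : R) : (forall K, `|a - b| <= B * 2 ^- K) -> a = b.
Proof.
move=> close; apply/eqP; rewrite -subr_eq0 -normr_eq0 eq_le normr_ge0 andbT.
rewrite leNgt; apply/negP => dist_gt0.
have B_ge0 : 0 <= B by have := close 0%N; rewrite expr0 invr1 mulr1; exact: le_trans.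
have B1_gt0 : 0 < B + 1 by lra.
have [K ltK] := exp2N_lt (divr_gt0 dist_gt0 B1_gt0).
have := close K; have := exp2N_gt0 K; rewrite ltr_pdivlMr // in ltK.
nra.
Qed.

Section HalvingEquation.
Variables (X : Type) (t : X -> X).

Lemma halving_unique (H u v : X -> R) (B : R) : (forall x, `|u x - v x| <= B) ->
  (forall x, u x = (H x + u (t x)) / 2) -> (forall x, v x = (H x + v (t x)) / 2) ->
  u = v.
Proof.
move=> bounded_uv eq_u eq_v; apply: functional_extensionality => x.
apply: (@eq_of_dist_le_exp2N _ _ B) => K.
elim: K x => [|K IH] x; first by rewrite expr0 invr1 mulr1.
rewrite eq_u eq_v; move: (IH (t x)); rewrite (exp2NS K) !ler_norml => /andP[lo hi].
apply/andP; split; lra.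
Qed.

Variables (H : X -> R) (H01 : forall x, 0 <= H x <= 1).

Fixpoint halving_sum K x := if K is K'.+1 then (H x + halving_sum K' (t x)) / 2 else 0.

Lemma halving_sum01 K x : 0 <= halving_sum K x <= 1.
Proof.
elim: K x => [|K IH] x /=; first by rewrite lexx ler01.
by move: (H01 x) (IH (t x)) => /andP[h0 h1] /andP[s0 s1]; apply/andP; split; lra.
Qed.

Lemma halving_sum_tail K j x : 0 <= halving_sum (K + j) x - halving_sum K x <= 2 ^- K.
Proof.
elim: K x => [|K IH] x /=.
  by rewrite expr0 invr1 subr0 add0n; exact: halving_sum01.
by move: (IH (t x)); rewrite (exp2NS K) => /andP[? ?]; apply/andP; split; lra.
Qed.

Lemma halving_sum_le K K' x : halving_sum K' x <= halving_sum K x + 2 ^- K.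
Proof.
have := exp2N_gt0 K => pos; case: (leqP K' K) => [le_K'K | /ltnW le_KK'].
  by move: (halving_sum_tail K' (K - K') x); rewrite subnKC // => /andP[? ?]; lra.
by move: (halving_sum_tail K (K' - K) x); rewrite subnKC // => /andP[? ?]; lra.
Qed.

Let halving_sums x (r : R) := exists K, r = halving_sum K x.

Let halving_sums_bounded x : Raxioms.bound (halving_sums x).
Proof. by exists 1 => _ [K ->]; apply/RleP; case/andP: (halving_sum01 K x). Qed.

Let halving_sums_inhabited x : exists r, halving_sums x r.
Proof. by exists 0, 0%N. Qed.

(* The series sum_k H (t^k x) / 2^(k+1), as the supremum of its partial sums. *)
Definition halving_lim x : R :=
  sval (Raxioms.completeness _ (halving_sums_bounded x) (halving_sums_inhabited x)).

Lemma halving_lim_bounds K x : halving_sum K x <= halving_lim x <= halving_sum K x + 2 ^- K.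
Proof.
rewrite /halving_lim; case: Raxioms.completeness => l [ub least] /=.
apply/andP; split; first by apply/RleP; apply: ub; exists K.
by apply/RleP; apply: least => _ [K' ->]; apply/RleP; apply: halving_sum_le.
Qed.

Lemma halving_lim01 x : 0 <= halving_lim x <= 1.
Proof. by move: (halving_lim_bounds 0 x); rewrite /= expr0 invr1 add0r. Qed.

Lemma halving_limE x : halving_lim x = (H x + halving_lim (t x)) / 2.
Proof.
apply: (@eq_of_dist_le_exp2N _ _ 1) => K; rewrite mul1r.
move: (halving_lim_bounds K.+1 x) (halving_lim_bounds K (t x)) => /=.
rewrite (exp2NS K) ler_norml => /andP[? ?] /andP[? ?].
apply/andP; split; lra.
Qed.

End HalvingEquation.

Section SimplexConvexBody.
Variable n : nat.

Lemma nonneg_sum1_in_simplex (v : 'I_n.+1 -> R) :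
  (forall i, 0 <= v i) -> \sum_i v i = 1 -> in_simplex v.
Proof.
move=> ge0 sum1; split=> // i; rewrite ge0 /= -sum1 (bigD1 i) //= lerDl.
exact: sumr_ge0.
Qed.

Lemma simplex_ext (x y : simplex n) : (forall i, sval x i = sval y i) -> x = y.
Proof.
case: x y => [x x_in] [y y_in] /= eq_xy.
have {}eq_xy : x = y by apply: functional_extensionality.
by subst y; congr exist; apply: proof_irrelevance.
Qed.

Lemma simplex01 (x : simplex n) i : 0 <= sval x i <= 1.
Proof. by case: x => w [w01 _] /=; apply: w01. Qed.

Lemma simplex_sum (x : simplex n) : \sum_i sval x i = 1.
Proof. by case: x => w []. Qed.

Lemma simplex_is_midpoint_set : is_midpoint_set (@simplex_mid n).
Proof.
by split; [|split] => *; apply: simplex_ext => i /=; lra.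
Qed.

Lemma simplex_cancellative : cancellative (@simplex_mid n).
Proof.
move=> x y z eq_mid; apply: simplex_ext => i.
by move: (congr1 (fun u : simplex n => sval u i) eq_mid) => /=; lra.
Qed.

Lemma simplex_iterative : iterative (@simplex_mid n).
Proof.
move=> X hd tl.
pose u x i := halving_lim tl (fun x => simplex01 (hd x) i) x.
have u_rec i x : u x i = (sval (hd x) i + u (tl x) i) / 2 by apply: halving_limE.
have u01 x i : 0 <= u x i <= 1 by apply: halving_lim01.
have u_in x : in_simplex (u x).
  split=> [i|]; first exact: u01.
  have sum_rec y : \sum_i u y i = (1 + \sum_i u (tl y) i) / 2.
    by rewrite (eq_bigr _ (fun i _ => u_rec i y)) -mulr_suml big_split simplex_sum.
  have sum_le y : `|\sum_i u y i - 1| <= n.+1%:R + 1.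
    have lo : 0 <= \sum_i u y i by apply: sumr_ge0 => i _; case/andP: (u01 y i).
    have hi : \sum_i u y i <= n.+1%:R.
      rewrite -[X in X%:R]card_ord -sumr_const.
      by apply: ler_sum => i _; case/andP: (u01 y i).
    have := ler0n R n.+1 => n_ge0.
    by rewrite ler_norml; apply/andP; split; lra.
  have sum1 : (fun y => \sum_i u y i) = fun=> 1.
    by apply: (halving_unique (H := fun=> 1) sum_le) => // y; lra.
  by move/(congr1 (fun F => F x)): sum1.
exists (fun x => exist _ (u x) (u_in x)); split=> [x | v v_rec].
  by apply: simplex_ext => i /=; apply: u_rec.
apply: functional_extensionality => x; apply: simplex_ext => i /=.
suff /(congr1 (fun F => F x)) : (fun y => sval (v y) i) = u^~ i by [].
have dist_le1 y : `|sval (v y) i - u y i| <= 1.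
  move: (simplex01 (v y) i) (u01 y i) => /andP[? ?] /andP[? ?].
  by rewrite ler_norml; apply/andP; split; lra.
by apply: (halving_unique (t := tl) dist_le1) => y; [rewrite (v_rec y) | apply: u_rec].
Qed.

Lemma simplex_m_convex_body : m_convex_body (@simplex_mid n).
Proof.
split; first exact: simplex_is_midpoint_set.
by split; [exact: simplex_cancellative | exact: simplex_iterative].
Qed.
End SimplexConvexBody.

Section Multisets.
Variable n : nat.

(* Multisets of vertices are counting functions on nat, of which only the values below n.+1
   matter; [mtake K l] keeps the first K elements of [l] in index order. *)
Definition mass (l : nat -> nat) := (\sum_(i < n.+1) l i)%N.
Definition madd (a b : nat -> nat) i := (a i + b i)%N.
Definition munit (x : 'I_n.+1) (i : nat) := nat_of_bool (i == x).
Definition mtake K (l : nat -> nat) i := minn (l i) (K - \sum_(j < i) l j)%N.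
Definition mdrop K (l : nat -> nat) i := (l i - mtake K l i)%N.

Lemma mtake_le K l i : (mtake K l i <= l i)%N.
Proof. exact: geq_minl. Qed.

Lemma mass_mtake K l : mass (mtake K l) = minn K (mass l).
Proof.
rewrite /mass; elim: n.+1 => [|m IH]; first by rewrite !big_ord0 minn0.
by rewrite !big_ord_recr /= IH /mtake; set S := (\sum_(i < m) l i)%N; lia.
Qed.

Lemma eq_mass a b : (forall i, (i < n.+1)%N -> a i = b i) -> mass a = mass b.
Proof. by move=> eq_ab; apply: eq_bigr => i _; apply: eq_ab. Qed.

Lemma mass_madd a b : mass (madd a b) = (mass a + mass b)%N.
Proof. exact: big_split. Qed.

Lemma mass_munit x : mass (munit x) = 1%N.
Proof.
rewrite /mass (bigD1 x) //= /munit eqxx big1 // => i /negbTE ne_ix.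
by rewrite -[_ == _]/(i == x) ne_ix.
Qed.

Lemma mass_scale k l : mass (fun i => k * l i)%N = (k * mass l)%N.
Proof. by rewrite /mass big_distrr. Qed.

Lemma mass_mdrop K l : (mass (mdrop K l) + mass (mtake K l))%N = mass l.
Proof.
by rewrite -mass_madd; apply: eq_mass => i _; rewrite /madd /mdrop subnK ?mtake_le.
Qed.

Lemma mass_halves N l : mass l = (2 ^ N.+1)%N ->
  mass (mtake (2 ^ N) l) = (2 ^ N)%N /\ mass (mdrop (2 ^ N) l) = (2 ^ N)%N.
Proof.
move=> mass_l; have mass_take : mass (mtake (2 ^ N) l) = (2 ^ N)%N.
  by rewrite mass_mtake mass_l expnS; lia.
by split=> //; move: (mass_mdrop (2 ^ N) l); rewrite mass_take mass_l expnS; lia.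
Qed.

Lemma le_mass l i : (i < n.+1)%N -> (l i <= mass l)%N.
Proof. by move=> lt_in; rewrite /mass (bigD1 (Ordinal lt_in)) //= leq_addr. Qed.

Lemma eq_of_mass_le a b : (forall i, (i < n.+1)%N -> (a i <= b i)%N) -> mass a = mass b ->
  forall i, (i < n.+1)%N -> a i = b i.
Proof.
move=> le_ab eq_mass_ab i lt_in; apply/eqP; rewrite eqn_leq le_ab //= leqNgt.
apply/negP => lt_ab; move: eq_mass_ab; apply/eqP; rewrite neq_ltn; apply/orP; left.
rewrite /mass (bigD1 (Ordinal lt_in)) //= [X in (_ < X)%N](bigD1 (Ordinal lt_in)) //=.
by rewrite -addSn leq_add //; apply: leq_sum => j _; apply: le_ab.
Qed.

Lemma mass_sub_munit (a : nat -> nat) (x : 'I_n.+1) : (0 < a x)%N ->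
  (mass (fun i => a i - munit x i)%N).+1 = mass a.
Proof.
move=> pos_ax; rewrite -addn1 -(mass_munit x) -mass_madd; apply: eq_mass => i _.
by rewrite /madd /munit; case: eqP => [->|]; lia.
Qed.

Lemma mass_msub a c : (forall i, (i < n.+1)%N -> c i <= a i)%N ->
  mass (fun i => a i - c i)%N = (mass a - mass c)%N.
Proof.
move=> le_ca; apply/eqP; rewrite -(eqn_add2r (mass c)) subnK; last first.
  by apply: leq_sum => i _; apply: le_ca.
by rewrite -mass_madd; apply/eqP/eq_mass => i lt_in; rewrite /madd subnK ?le_ca.
Qed.

Lemma mass_gt0_exists l : (0 < mass l)%N -> exists x : 'I_n.+1, (0 < l x)%N.
Proof.
move=> pos_mass; apply/existsP; apply: contraTT pos_mass => /existsPn all0.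
by rewrite -leqNgt leqn0 /mass; apply/eqP/big1 => i _; move: (all0 i); rewrite lt0n negbK => /eqP.
Qed.

Lemma mass1_munit l (x : 'I_n.+1) : mass l = 1%N -> (0 < l x)%N ->
  forall i, (i < n.+1)%N -> l i = munit x i.
Proof.
move=> mass1 pos_x i lt_in; have := le_mass (fun j => l j - munit x j)%N lt_in.
rewrite -ltnS mass_sub_munit // mass1; have := le_mass l (ltn_ord x); rewrite mass1.
by rewrite /munit; case: eqP => [->|] /=; lia.
Qed.

Lemma mass_excess a b : mass a = mass b -> (exists x : 'I_n.+1, b x < a x)%N ->
  exists y : 'I_n.+1, (a y < b y)%N.
Proof.
move=> eq_ab [x lt_x]; apply/existsP; apply: contraT => /existsPn le_ba.
have le_ba' i : (i < n.+1)%N -> (b i <= a i)%N.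
  by move=> lt_in; rewrite leqNgt (le_ba (Ordinal lt_in)).
by move: lt_x; rewrite (eq_of_mass_le le_ba' (esym eq_ab)) ?ltnn.
Qed.

Definition mswap (a : nat -> nat) (x y : 'I_n.+1) := madd (fun i => a i - munit x i)%N (munit y).

Lemma mass_mswap (a : nat -> nat) (x y : 'I_n.+1) : (0 < a x)%N -> mass (mswap a x y) = mass a.
Proof. by move=> pos_ax; rewrite mass_madd mass_munit addn1 mass_sub_munit. Qed.

Lemma mswapD (a b : nat -> nat) (x y : 'I_n.+1) i : (0 < a x)%N -> (0 < b y)%N ->
  (mswap a x y i + mswap b y x i = a i + b i)%N.
Proof. by rewrite /mswap /madd /munit; case: eqP => [->|_]; case: eqP => [->|_] /=; lia. Qed.

Lemma mass_mswap_sub (a a' : nat -> nat) (x y : 'I_n.+1) : (a' x < a x)%N -> (a y < a' y)%N ->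
  (mass (fun i => mswap a x y i - a' i)%N).+1 = mass (fun i => a i - a' i)%N.
Proof.
move=> lt_x lt_y; rewrite -(@mass_sub_munit (fun i => a i - a' i)%N x) /=; last by lia.
congr _.+1; apply: eq_mass => i _; move: lt_x lt_y; rewrite /mswap /madd /munit.
by case: eqP => [->|_]; case: eqP => [->|_] /=; lia.
Qed.

End Multisets.

Section DyadicPoints.
Variable n : nat.
Local Notation mass := (mass n).

Definition dyadic N (l : nat -> nat) (i : 'I_n.+1) := ((l i)%:R : R) / (2 ^ N)%:R.

Definition is_dyadic (v : 'I_n.+1 -> R) := exists N l, mass l = (2 ^ N)%N /\ v = dyadic N l.

Definition dyadic_repr (v : 'I_n.+1 -> R) : nat * (nat -> nat) :=
  epsilon (inhabits (0%N, fun=> 0%N))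
    (fun p => mass p.2 = (2 ^ p.1)%N /\ v = dyadic p.1 p.2).

Lemma dyadic_reprP v : is_dyadic v ->
  mass (dyadic_repr v).2 = (2 ^ (dyadic_repr v).1)%N /\
  v = dyadic (dyadic_repr v).1 (dyadic_repr v).2.
Proof.
move=> [N [l dyadic_l]].
apply: (@epsilon_spec _ _ (fun p => mass p.2 = (2 ^ p.1)%N /\ v = dyadic p.1 p.2)).
by exists (N, l).
Qed.

Lemma pow2_gt0 N : 0 < (2 ^ N)%:R :> R.
Proof. by rewrite ltr0n expn_gt0. Qed.

Lemma pow2_neq0 N : (2 ^ N)%:R != 0 :> R.
Proof. by rewrite gt_eqF ?pow2_gt0. Qed.

Lemma dyadic_scale N k l : dyadic N l = dyadic (N + k) (fun i => 2 ^ k * l i)%N.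
Proof.
apply: functional_extensionality => i; rewrite /dyadic expnD !natrM.
by field; rewrite !pow2_neq0.
Qed.

Lemma dyadic_inj N l l' : dyadic N l = dyadic N l' -> forall i, (i < n.+1)%N -> l i = l' i.
Proof.
move=> eq_ll' i lt_in; move: (congr1 (fun v => v (Ordinal lt_in) * (2 ^ N)%:R) eq_ll').
by rewrite /dyadic /= !mulfVK ?pow2_neq0 // => /eqP; rewrite eqr_nat => /eqP.
Qed.

Lemma dyadic_mid N a b : (fun i => (dyadic N a i + dyadic N b i) / 2) = dyadic N.+1 (madd a b).
Proof.
apply: functional_extensionality => i; rewrite /dyadic /madd natrD expnS natrM.
by field; rewrite pow2_neq0.
Qed.

Lemma is_dyadic_mid v v' : is_dyadic v -> is_dyadic v' -> is_dyadic (fun i => (v i + v' i) / 2).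
Proof.
move=> [N [l [mass_l ->]]] [N' [l' [mass_l' ->]]].
rewrite (dyadic_scale N N' l) (dyadic_scale N' N l') addnC dyadic_mid.
exists (N' + N).+1, (madd (fun i => 2 ^ N' * l i) (fun i => 2 ^ N * l' i))%N; split=> //.
by rewrite mass_madd !mass_scale mass_l mass_l' -!expnD expnS [(N + N')%N]addnC addnn mul2n.
Qed.

Lemma sum_dyadic N l : \sum_i dyadic N l i = (mass l)%:R / (2 ^ N)%:R.
Proof. by rewrite -mulr_suml -natr_sum. Qed.

Lemma dyadic_in_simplex N l : mass l = (2 ^ N)%N -> in_simplex (dyadic N l).
Proof.
move=> mass_l; have ge0 i : 0 <= dyadic N l i by rewrite divr_ge0 ?ler0n.
have sum1 : \sum_i dyadic N l i = 1.
  by rewrite sum_dyadic mass_l divff ?pow2_neq0.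
exact: nonneg_sum1_in_simplex.
Qed.

Lemma dyadic_munit x : dyadic 0 (munit x) = delta x.
Proof.
apply: functional_extensionality => i; rewrite /dyadic /delta /munit expn0 divr1.
case: eqP => [/val_inj ->|ne_ix]; rewrite ?eqxx //.
by case: eqP => // eq_ix; case: ne_ix; rewrite eq_ix.
Qed.

Definition dyadic_point N l (mass_l : mass l = (2 ^ N)%N) : simplex n :=
  exist _ (dyadic N l) (dyadic_in_simplex mass_l).

End DyadicPoints.

Section TreeMean.
Variables (n : nat) (A : Type) (mA : A -> A -> A) (f : 'I_n.+1 -> A).
Hypothesis mA_midpoint : is_midpoint_set mA.
Let mAxx : forall x, mA x x = x. Proof. by case: mA_midpoint. Qed.
Let mAC : forall x y, mA x y = mA y x. Proof. by case: mA_midpoint => _ []. Qed.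
Let mAACA : forall x y z w, mA (mA x y) (mA z w) = mA (mA x z) (mA y w).
Proof. by case: mA_midpoint => _ []. Qed.

Local Notation mass := (mass n).
Local Notation dyadic := (@dyadic n).

(* Intended for [mass l = 2 ^ N]; at N = 0 it is the image of the unique vertex of [l]. *)
Fixpoint tmean N (l : nat -> nat) : A :=
  if N is N'.+1 then mA (tmean N' (mtake (2 ^ N') l)) (tmean N' (mdrop (2 ^ N') l))
  else f (odflt ord0 [pick i : 'I_n.+1 | (0 < l i)%N]).

Lemma eq_tmean N a b : (forall i, (i < n.+1)%N -> a i = b i) -> tmean N a = tmean N b.
Proof.
elim: N a b => [|N IH] a b eq_ab /=.
  by congr (f (odflt _ _)); apply: eq_pick => i /=; rewrite eq_ab.
have eq_take i : (i < n.+1)%N -> mtake (2 ^ N) a i = mtake (2 ^ N) b i.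
  move=> lt_in; rewrite /mtake eq_ab //; congr (minn _ (_ - _)).
  by apply: eq_bigr => j _; apply/eq_ab/(ltn_trans _ lt_in).
by congr mA; apply: IH => i lt_in; rewrite /mdrop eq_take ?eq_ab.
Qed.

Lemma tmean0 l (x : 'I_n.+1) : mass l = 1%N -> (0 < l x)%N -> tmean 0 l = f x.
Proof.
move=> mass1 pos_x /=; case: pickP => [i /= pos_i | /(_ x)]; last by rewrite pos_x.
congr f; apply/val_inj/eqP; move: pos_i; rewrite (mass1_munit mass1 pos_x) //.
by rewrite /munit lt0b.
Qed.

Lemma tmean_sub_munit N (a : nat -> nat) (x : 'I_n.+1) : (0 < a x)%N ->
  tmean N (madd (fun i => a i - munit x i)%N (munit x)) = tmean N a.
Proof. by move=> pos_ax; apply: eq_tmean => i _; rewrite /madd /munit; case: eqP => [->|]; lia. Qed.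

Definition tmean_swap_law N := forall c d (x y : 'I_n.+1),
  (mass c).+1 = (2 ^ N)%N -> (mass d).+1 = (2 ^ N)%N ->
  mA (tmean N (madd c (munit x))) (tmean N (madd d (munit y))) =
  mA (tmean N (madd c (munit y))) (tmean N (madd d (munit x))).

Definition tmean_mid_law N := forall a b a' b',
  mass a = (2 ^ N)%N -> mass b = (2 ^ N)%N -> mass a' = (2 ^ N)%N -> mass b' = (2 ^ N)%N ->
  (forall i, (i < n.+1)%N -> a i + b i = a' i + b' i)%N ->
  mA (tmean N a) (tmean N b) = mA (tmean N a') (tmean N b').

Definition tmean_split_law N := forall a b, mass a = (2 ^ N)%N -> mass b = (2 ^ N)%N ->
  tmean N.+1 (madd a b) = mA (tmean N a) (tmean N b).

Lemma tmean_mswap N (a b : nat -> nat) (x y : 'I_n.+1) : tmean_swap_law N ->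
  mass a = (2 ^ N)%N -> mass b = (2 ^ N)%N -> (0 < a x)%N -> (0 < b y)%N ->
  mA (tmean N a) (tmean N b) = mA (tmean N (mswap a x y)) (tmean N (mswap b y x)).
Proof.
move=> swap mass_a mass_b pos_ax pos_by.
by rewrite -{1}(tmean_sub_munit N pos_ax) -{1}(tmean_sub_munit N pos_by) swap
  ?mass_sub_munit ?mass_a ?mass_b.
Qed.

Lemma tmean_mid_of_swap N : tmean_swap_law N -> tmean_mid_law N.
Proof.
(* Move [a] towards [a'] one vertex at a time. *)
move=> swap a b a' b' mass_a mass_b mass_a' mass_b' sum_eq.
have [k] := ubnP (mass (fun i => a i - a' i)%N).
elim: k => // k IH in a b mass_a mass_b sum_eq *; rewrite ltnS => le_k.
case: (boolP [exists x : 'I_n.+1, a' x < a x]%N) => [/existsP[x lt_x] | /existsPn le_aa'].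
  have [y lt_y] := mass_excess (etrans mass_a (esym mass_a')) (ex_intro _ x lt_x).
  have pos_by : (0 < b y)%N by move: (sum_eq y (ltn_ord y)); lia.
  rewrite (tmean_mswap swap mass_a mass_b (x := x) (y := y)) //; last by lia.
  apply: IH; rewrite ?mass_mswap //; try lia.
    by move=> i lt_in; rewrite mswapD ?sum_eq //; lia.
  by rewrite -ltnS mass_mswap_sub.
have le_a i : (i < n.+1)%N -> (a i <= a' i)%N.
  by move=> lt_in; rewrite leqNgt (le_aa' (Ordinal lt_in)).
have eq_a := eq_of_mass_le le_a (etrans mass_a (esym mass_a')).
by congr mA; apply: eq_tmean => i lt_in; move: (eq_a i lt_in) (sum_eq i lt_in); lia.
Qed.

Lemma tmean_split_of_mid N : tmean_mid_law N -> tmean_split_law N.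
Proof.
move=> mid a b mass_a mass_b /=.
have mass_ab : mass (madd a b) = (2 ^ N.+1)%N by rewrite mass_madd mass_a mass_b expnS; lia.
have [mass_take mass_drop] := mass_halves mass_ab.
apply: mid => // i _; move: (mtake_le (2 ^ N) (madd a b) i).
by rewrite /mdrop /madd; lia.
Qed.

Lemma tmean_split_at N a (x : 'I_n.+1) : mass a = (2 ^ N.+1)%N -> (0 < a x)%N ->
  exists c a2, [/\ (mass c).+1 = (2 ^ N)%N, mass a2 = (2 ^ N)%N,
    (forall i, (i < n.+1)%N -> a i = c i + munit x i + a2 i)%N &
    tmean N.+1 a = mA (tmean N (madd c (munit x))) (tmean N a2)].
Proof.
move=> mass_a pos_ax; have [mass_take mass_drop] := mass_halves mass_a.
have take_le := mtake_le (2 ^ N) a.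
have [take_x0 | pos_take_x] := posnP (mtake (2 ^ N) a x).
  have pos_drop_x : (0 < mdrop (2 ^ N) a x)%N by rewrite /mdrop take_x0 subn0.
  exists (fun i => mdrop (2 ^ N) a i - munit x i)%N, (mtake (2 ^ N) a); split.
  - by rewrite mass_sub_munit.
  - by [].
  - by move=> i _; move: (take_le i); rewrite /mdrop /munit; case: eqP => [->|] /=; lia.
  - by rewrite /= mAC tmean_sub_munit.
exists (fun i => mtake (2 ^ N) a i - munit x i)%N, (mdrop (2 ^ N) a); split.
- by rewrite mass_sub_munit.
- by [].
- by move=> i _; move: (take_le i); rewrite /mdrop /munit; case: eqP => [->|] /=; lia.
- by rewrite /= tmean_sub_munit.
Qed.

Lemma tmean_swap_succ N : tmean_swap_law N -> tmean_split_law N -> tmean_swap_law N.+1.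
Proof.
move=> swap split c d x y mass_c mass_d.
have mass_munitD M e (z : 'I_n.+1) : (mass e).+1 = (2 ^ M)%N -> mass (madd e (munit z)) = (2 ^ M)%N.
  by rewrite mass_madd mass_munit addn1.
have pos_munitD e (z : 'I_n.+1) : (0 < madd e (munit z) z)%N by rewrite /madd /munit eqxx addn1.
have [c1 [a2 [mass_c1 mass_a2 eq_c ->]]] :=
  tmean_split_at (mass_munitD _ c x mass_c) (pos_munitD c x).
have [d1 [b2 [mass_d1 mass_b2 eq_d ->]]] :=
  tmean_split_at (mass_munitD _ d y mass_d) (pos_munitD d y).
rewrite mAACA swap // -mAACA -!split //; try exact: mass_munitD.
by congr mA; apply: eq_tmean => i lt_in; move: (eq_c i lt_in) (eq_d i lt_in); rewrite /madd; lia.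
Qed.

Lemma tmean_swap N : tmean_swap_law N.
Proof.
elim: N => [|N IH]; last first.
  by apply: tmean_swap_succ => //; apply/tmean_split_of_mid/tmean_mid_of_swap.
have tmean0_munitD e (z : 'I_n.+1) : (mass e).+1 = 1%N -> tmean 0 (madd e (munit z)) = f z.
  move=> mass_e; apply: tmean0; last by rewrite /madd /munit eqxx addn1.
  by rewrite mass_madd mass_munit addn1.
by move=> c d x y mass_c mass_d; rewrite !tmean0_munitD // mAC.
Qed.

Lemma tmean_madd N : tmean_split_law N.
Proof. exact/tmean_split_of_mid/tmean_mid_of_swap/tmean_swap. Qed.

Lemma tmean_scale N k l : mass l = (2 ^ N)%N ->
  tmean (N + k) (fun i => 2 ^ k * l i)%N = tmean N l.
Proof.
move=> mass_l; elim: k => [|k IH].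
  by rewrite addn0; apply: eq_tmean => i _; rewrite mul1n.
have mass_kl : mass (fun i => 2 ^ k * l i)%N = (2 ^ (N + k))%N.
  by rewrite mass_scale mass_l -expnD addnC.
rewrite addnS -IH -[RHS]mAxx -tmean_madd //.
by apply: eq_tmean => i _; rewrite /madd expnS; lia.
Qed.

Lemma tmean_dyadic N l N' l' : mass l = (2 ^ N)%N -> mass l' = (2 ^ N')%N ->
  dyadic N l = dyadic N' l' -> tmean N l = tmean N' l'.
Proof.
wlog le_NN' : N l N' l' / (N <= N')%N.
  move=> base mass_l mass_l' eq_ll'; case: (leqP N N') => [|/ltnW] le_N.
    exact: base.
  by symmetry; apply: base.
move=> mass_l mass_l'; rewrite -(subnKC le_NN') (dyadic_scale n N (N' - N) l) => eq_ll'.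
by rewrite -(tmean_scale (N' - N) mass_l); apply: eq_tmean; apply: dyadic_inj eq_ll'.
Qed.

(* Well defined by [tmean_dyadic], whatever representation [dyadic_repr] picks. *)
Definition dyadic_eval (v : 'I_n.+1 -> R) := tmean (dyadic_repr v).1 (dyadic_repr v).2.

Lemma dyadic_evalE N l : mass l = (2 ^ N)%N -> dyadic_eval (dyadic N l) = tmean N l.
Proof.
move=> mass_l; have [] := @dyadic_reprP n (dyadic N l); first by exists N, l.
by move=> mass_repr eq_repr; symmetry; apply: tmean_dyadic.
Qed.

Lemma dyadic_eval_mid v v' : is_dyadic v -> is_dyadic v' ->
  dyadic_eval (fun i => (v i + v' i) / 2) = mA (dyadic_eval v) (dyadic_eval v').
Proof.
move=> [N [l [mass_l ->]]] [N' [l' [mass_l' ->]]].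
rewrite (dyadic_scale n N N' l) (dyadic_scale n N' N l') addnC dyadic_mid.
have mass_l2 : mass (fun i => 2 ^ N' * l i)%N = (2 ^ (N' + N))%N.
  by rewrite mass_scale mass_l -expnD.
have mass_l2' : mass (fun i => 2 ^ N * l' i)%N = (2 ^ (N' + N))%N.
  by rewrite mass_scale mass_l' -expnD addnC.
rewrite !dyadic_evalE ?tmean_madd //.
by rewrite mass_madd mass_l2 mass_l2' expnS; lia.
Qed.

End TreeMean.

Section Digits.
Variable n : nat.
Local Notation mass := (mass n).
Local Notation dyadic := (@dyadic n).

Definition digit_floors (w : simplex n) (k : nat) :=
  Num.truncn ((2 ^ n.+1)%:R * sval w (inord k)).

(* sum_i floor (2^(n+1) w_i) > 2^(n+1) - (n + 1) >= 2^n. *)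
Lemma mass_digit_floors w : (2 ^ n <= mass (digit_floors w))%N.
Proof.
have floor_gt i : (2 ^ n.+1)%:R * sval w i < (digit_floors w i).+1%:R.
  by rewrite /digit_floors inord_val truncnS_gt.
have : (2 ^ n.+1)%:R < (mass (digit_floors w) + n.+1)%:R :> R.
  have -> : (2 ^ n.+1)%:R = \sum_i (2 ^ n.+1)%:R * sval w i :> R.
    by rewrite -mulr_sumr simplex_sum mulr1.
  have -> : (mass (digit_floors w) + n.+1)%:R = \sum_(i < n.+1) ((digit_floors w i)%:R + 1) :> R.
    by rewrite big_split /= sumr_const card_ord -natr_sum natrD.
  apply: ltr_sum => [|i _]; last by rewrite natr1; exact: floor_gt.
  by apply/hasP; exists ord0; rewrite ?mem_index_enum.
by rewrite ltr_nat expnS; have := ltn_expl n (ltnSn 1); lia.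
Qed.

Definition digit_counts w := mtake (2 ^ n) (digit_floors w).

Lemma mass_digit_counts w : mass (digit_counts w) = (2 ^ n)%N.
Proof. by rewrite mass_mtake; have := mass_digit_floors w; lia. Qed.

Definition digit w : simplex n := dyadic_point (mass_digit_counts w).

Lemma digit_le w i : sval (digit w) i <= 2 * sval w i.
Proof.
rewrite /= /dyadic ler_pdivrMr ?pow2_gt0 // mulrC.
apply: (@le_trans _ _ (digit_floors w i)%:R); first by rewrite ler_nat mtake_le.
have w_ge0 : 0 <= sval w i by case/andP: (simplex01 w i).
apply: (@le_trans _ _ ((2 ^ n.+1)%:R * sval w i)).
  by rewrite /digit_floors inord_val truncn_le mulr_ge0 ?ler0n.
rewrite expnS natrM; lra.
Qed.

Lemma rest_in_simplex w : in_simplex (fun i => 2 * sval w i - sval (digit w) i).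
Proof.
have ge0 i : 0 <= 2 * sval w i - sval (digit w) i by rewrite subr_ge0 digit_le.
have sum1 : \sum_i (2 * sval w i - sval (digit w) i) = 1.
  by rewrite sumrB -mulr_sumr !simplex_sum; lra.
exact: nonneg_sum1_in_simplex.
Qed.

Definition rest w : simplex n := exist _ _ (rest_in_simplex w).

Lemma digit_rest_mid w : simplex_mid (digit w) (rest w) = w.
Proof. by apply: simplex_ext => i /=; lra. Qed.

Definition digit_numer (w : simplex n) i := (2 * digit_counts w i)%N.

Lemma mass_digit_numer w : mass (digit_numer w) = (2 ^ n.+1)%N.
Proof. by rewrite mass_scale mass_digit_counts expnS. Qed.

Lemma dyadic_digit_numer w : dyadic n.+1 (digit_numer w) = sval (digit w).
Proof. by rewrite /= (dyadic_scale n n 1) addn1. Qed.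

(* Numerators at level n+1 of 2 d + digit w, where d = dyadic n.+1 num. *)
Definition dbl_digit num w := madd (fun i => 2 * num i)%N (digit_numer w).

Lemma mass_dbl_digit num w : mass num = (2 ^ n.+1)%N -> mass (dbl_digit num w) = (3 * 2 ^ n.+1)%N.
Proof. by move=> mass_num; rewrite mass_madd mass_scale mass_num mass_digit_numer; lia. Qed.

Lemma dyadic_dbl_digit num w (i : 'I_n.+1) :
  dyadic n.+1 (dbl_digit num w) i = 2 * dyadic n.+1 num i + sval (digit w) i.
Proof.
rewrite -dyadic_digit_numer /dyadic /dbl_digit /madd natrD natrM.
by field; rewrite pow2_neq0.
Qed.

Lemma dyadic_dbl_digit_sub num w (c : nat -> nat) (i : 'I_n.+1) : (c i <= dbl_digit num w i)%N ->
  dyadic n.+1 (fun j => dbl_digit num w j - c j)%N i =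
  dyadic n.+1 (dbl_digit num w) i - 2 * dyadic n.+2 c i.
Proof.
move=> le_c; rewrite /dyadic natrB // (expnS 2 n.+1) natrM.
by field; rewrite pow2_neq0.
Qed.

Lemma dyadic_dbl_digit_rest num w (i : 'I_n.+1) :
  dyadic n.+1 (dbl_digit num w) i = 2 * (dyadic n.+1 num i + sval w i) - sval (rest w) i.
Proof. by rewrite dyadic_dbl_digit /=; lra. Qed.

Lemma mass_dbl_digit_sub num w (c : nat -> nat) :
  mass num = (2 ^ n.+1)%N -> mass c = (2 ^ n.+2)%N -> (forall i, c i <= dbl_digit num w i)%N ->
  mass (fun i => dbl_digit num w i - c i)%N = (2 ^ n.+1)%N.
Proof.
move=> mass_num mass_c le_c; rewrite mass_msub => [|i _]; last exact: le_c.
by rewrite mass_dbl_digit // mass_c !expnS; lia.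
Qed.

End Digits.

Section MidSplits.
Variable n : nat.
Local Notation mass := (mass n).
Local Notation dyadic := (@dyadic n).

(* Two decompositions d1 + w1 = d2 + w2, i.e. mid d1 w1 = mid d2 w2, with d1 and d2 dyadic of
   level n+1. *)
Record mid_split := MidSplit {
  ms_num1 : nat -> nat; ms_pt1 : simplex n; ms_num2 : nat -> nat; ms_pt2 : simplex n;
  ms_mass1 : mass ms_num1 = (2 ^ n.+1)%N; ms_mass2 : mass ms_num2 = (2 ^ n.+1)%N;
  ms_eq : forall i, dyadic n.+1 ms_num1 i + sval ms_pt1 i = dyadic n.+1 ms_num2 i + sval ms_pt2 i }.

Definition ms_dbl1 x := dbl_digit (ms_num1 x) (ms_pt1 x).
Definition ms_dbl2 x := dbl_digit (ms_num2 x) (ms_pt2 x).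
Definition ms_min x i := minn (ms_dbl1 x i) (ms_dbl2 x i).

(* Both 2 d_k + digit w_k equal 2 (d1 + w1) - rest w_k, and each rest has mass 1. *)
Lemma mass_ms_min x : (2 ^ n.+2 <= mass (ms_min x))%N.
Proof.
pose s i := dyadic n.+1 (ms_num1 x) i + sval (ms_pt1 x) i.
pose r1 i := sval (rest (ms_pt1 x)) i; pose r2 i := sval (rest (ms_pt2 x)) i.
have min_ge i : 2 * s i <= dyadic n.+1 (ms_min x) i + r1 i + r2 i.
  have /andP[r1_ge0 _] := simplex01 (rest (ms_pt1 x)) i.
  have /andP[r2_ge0 _] := simplex01 (rest (ms_pt2 x)) i.
  rewrite /dyadic /ms_min; case: leqP => _; rewrite -/(dyadic n.+1 _ i) dyadic_dbl_digit_rest.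
    by rewrite /s /r1 /r2; lra.
  by rewrite -ms_eq /s /r1 /r2; lra.
have sum_s : \sum_i s i = 2.
  by rewrite big_split /= simplex_sum sum_dyadic (ms_mass1 x) divff ?pow2_neq0.
have sum_r1 : \sum_i r1 i = 1 by exact: simplex_sum.
have sum_r2 : \sum_i r2 i = 1 by exact: simplex_sum.
have : \sum_i 2 * s i <= \sum_i (dyadic n.+1 (ms_min x) i + r1 i + r2 i).
  by apply: ler_sum => i _; exact: min_ge.
rewrite -mulr_sumr sum_s big_split sum_r2 big_split sum_r1 sum_dyadic /= => sum_ge.
have : 2 <= (mass (ms_min x))%:R / (2 ^ n.+1)%:R :> R by lra.
by rewrite ler_pdivlMr ?pow2_gt0 // -natrM -expnS ler_nat.
Qed.

Definition ms_common x := mtake (2 ^ n.+2) (ms_min x).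

Lemma mass_ms_common x : mass (ms_common x) = (2 ^ n.+2)%N.
Proof. by rewrite mass_mtake; have := mass_ms_min x; lia. Qed.

Lemma ms_common_le1 x i : (ms_common x i <= ms_dbl1 x i)%N.
Proof. by apply: leq_trans (mtake_le _ _ _) _; apply: geq_minl. Qed.

Lemma ms_common_le2 x i : (ms_common x i <= ms_dbl2 x i)%N.
Proof. by apply: leq_trans (mtake_le _ _ _) _; apply: geq_minr. Qed.

Definition ms_res1 x i := (ms_dbl1 x i - ms_common x i)%N.
Definition ms_res2 x i := (ms_dbl2 x i - ms_common x i)%N.

Lemma ms_next_eq x i : dyadic n.+1 (ms_res1 x) i + sval (rest (ms_pt1 x)) i =
  dyadic n.+1 (ms_res2 x) i + sval (rest (ms_pt2 x)) i.
Proof.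
rewrite !dyadic_dbl_digit_sub ?ms_common_le1 ?ms_common_le2 // !dyadic_dbl_digit_rest -ms_eq.
lra.
Qed.

Definition ms_next x : mid_split :=
  MidSplit (mass_dbl_digit_sub (ms_mass1 x) (mass_ms_common x) (ms_common_le1 x))
    (mass_dbl_digit_sub (ms_mass2 x) (mass_ms_common x) (ms_common_le2 x)) (ms_next_eq x).

End MidSplits.

Lemma mid_mid_transfer (T : Type) (m : T -> T -> T) : is_midpoint_set m -> cancellative m ->
  forall a b c d, m a (m b a) = m c (m d a) -> forall y, m a (m b y) = m c (m d y).
Proof.
move=> [_ [mC mACA]] m_cancel a b c d eq_a y; apply: (m_cancel (m c (m d a))).
have: m (m a (m b y)) (m c (m d a)) = m (m c (m d y)) (m a (m b a)).
  by rewrite [LHS]mACA [m (m b y) _]mACA [RHS]mACA [m (m d y) _]mACA (mC a c) (mC b d).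
by rewrite eq_a mC [m (m c (m d y)) _]mC.
Qed.

Section Freeness.
Variables (n : nat) (A : Type) (mA : A -> A -> A) (f : 'I_n.+1 -> A).
Hypothesis mA_body : m_convex_body mA.
Let mA_midpoint : is_midpoint_set mA. Proof. by case: mA_body. Qed.
Let mA_cancel : cancellative mA. Proof. by case: mA_body => _ []. Qed.
Let mA_iter : iterative mA. Proof. by case: mA_body => _ []. Qed.
Let mAxx : forall x, mA x x = x. Proof. by case: mA_midpoint. Qed.
Let mAC : forall x y, mA x y = mA y x. Proof. by case: mA_midpoint => _ []. Qed.
Let mAACA : forall x y z w, mA (mA x y) (mA z w) = mA (mA x z) (mA y w).
Proof. by case: mA_midpoint => _ []. Qed.

Local Notation mass := (mass n).
Local Notation dyadic := (@dyadic n).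
Local Notation eval := (dyadic_eval mA f).

Lemma eval_mid_mid e g p q : is_dyadic e -> is_dyadic g -> is_dyadic p -> is_dyadic q ->
  (forall i, 2 * e i + g i = 2 * p i + q i) ->
  forall y, mA (eval e) (mA (eval g) y) = mA (eval p) (mA (eval q) y).
Proof.
move=> De Dg Dp Dq eq_egpq; apply: mid_mid_transfer => //.
have eval_mid := dyadic_eval_mid f mA_midpoint.
rewrite -(eval_mid _ _ Dg De) -(eval_mid _ _ Dq De).
rewrite -(eval_mid _ _ De (is_dyadic_mid Dg De)) -(eval_mid _ _ Dp (is_dyadic_mid Dq De)).
congr eval.
by apply: functional_extensionality => i; move: (eq_egpq i); lra.
Qed.

Section Recursion.
Variable h : simplex n -> A.
Hypothesis h_rec : forall w, h w = mA (eval (sval (digit w))) (h (rest w)).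

Lemma h_step num w (c : nat -> nat) : mass num = (2 ^ n.+1)%N -> mass c = (2 ^ n.+2)%N ->
  (forall i, c i <= dbl_digit num w i)%N ->
  mA (eval (dyadic n.+1 num)) (h w) =
  mA (eval (dyadic n.+2 c))
    (mA (eval (dyadic n.+1 (fun i => dbl_digit num w i - c i)%N)) (h (rest w))).
Proof.
move=> mass_num mass_c le_c; rewrite {1}h_rec; apply: eval_mid_mid.
- by exists n.+1, num.
- by exists n, (digit_counts w); split; first exact: mass_digit_counts.
- by exists n.+2, c.
- by exists n.+1, (fun i => dbl_digit num w i - c i)%N; split=> //; apply: mass_dbl_digit_sub.
- by move=> i; rewrite dyadic_dbl_digit_sub // dyadic_dbl_digit; lra.
Qed.

(* Both sides solve the iteration equation along [ms_next] that peels off [ms_common]. *)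
Lemma h_mid_split x : mA (eval (dyadic n.+1 (ms_num1 x))) (h (ms_pt1 x)) =
  mA (eval (dyadic n.+1 (ms_num2 x))) (h (ms_pt2 x)).
Proof.
have [u [_ u_unique]] := mA_iter (fun y => eval (dyadic n.+2 (ms_common y))) (@ms_next n).
pose F1 y := mA (eval (dyadic n.+1 (ms_num1 y))) (h (ms_pt1 y)).
pose F2 y := mA (eval (dyadic n.+1 (ms_num2 y))) (h (ms_pt2 y)).
have F1_rec y : F1 y = mA (eval (dyadic n.+2 (ms_common y))) (F1 (ms_next y)).
  exact: h_step (ms_mass1 y) (mass_ms_common y) (ms_common_le1 y).
have F2_rec y : F2 y = mA (eval (dyadic n.+2 (ms_common y))) (F2 (ms_next y)).
  exact: h_step (ms_mass2 y) (mass_ms_common y) (ms_common_le2 y).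
by change (F1 x = F2 x); rewrite -(u_unique F1 F1_rec) (u_unique F2 F2_rec).
Qed.

Lemma h_mid_dyadic l (mass_l : mass l = (2 ^ n.+1)%N) w :
  h (simplex_mid (dyadic_point mass_l) w) = mA (eval (dyadic n.+1 l)) (h w).
Proof.
set z := simplex_mid _ w.
have eq_z i : dyadic n.+1 (digit_numer z) i + sval (rest z) i = dyadic n.+1 l i + sval w i.
  by rewrite dyadic_digit_numer /=; lra.
have := h_mid_split (MidSplit (mass_digit_numer z) mass_l eq_z).
by rewrite /= dyadic_digit_numer -h_rec.
Qed.

Lemma h_hom : midpoint_hom (@simplex_mid n) mA h.
Proof.
move=> w1 w2; pose c (p : simplex n * simplex n) := madd (digit_counts p.1) (digit_counts p.2).
have mass_c p : mass (c p) = (2 ^ n.+1)%N by rewrite mass_madd !mass_digit_counts expnS; lia.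
have [u [_ u_unique]] := mA_iter (fun p : simplex n * simplex n => eval (dyadic n.+1 (c p)))
  (fun p => (rest p.1, rest p.2)).
pose F1 p := h (simplex_mid p.1 p.2); pose F2 p := mA (h p.1) (h p.2).
have F1_rec p : F1 p = mA (eval (dyadic n.+1 (c p))) (F1 (rest p.1, rest p.2)).
  rewrite /F1 -(h_mid_dyadic (mass_c p)); congr h; apply: simplex_ext => i /=.
  rewrite -(dyadic_mid n) -!/(sval (digit _) i).
  by rewrite -{1}(digit_rest_mid p.1) -{1}(digit_rest_mid p.2) /=; lra.
have F2_rec p : F2 p = mA (eval (dyadic n.+1 (c p))) (F2 (rest p.1, rest p.2)).
  rewrite /F2 [h p.1]h_rec [h p.2]h_rec mAACA (dyadic_evalE f mA_midpoint (mass_c p)).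
  by rewrite tmean_madd ?mass_digit_counts // -!(dyadic_evalE f mA_midpoint (mass_digit_counts _)).
by change (F1 (w1, w2) = F2 (w1, w2)); rewrite -(u_unique F1 F1_rec) (u_unique F2 F2_rec).
Qed.

Lemma h_vertex i : h (vertex i) = f i.
Proof.
pose l k := (2 ^ n.+1 * munit i k)%N.
have mass_l : mass l = (2 ^ n.+1)%N by rewrite mass_scale mass_munit muln1.
have vertexE : dyadic_point mass_l = vertex i.
  apply: simplex_ext => j /=; have := dyadic_scale n 0 n.+1 (munit i).
  by rewrite add0n dyadic_munit => <-.
have eval_l : eval (dyadic n.+1 l) = f i.
  rewrite (dyadic_evalE f mA_midpoint mass_l).
  have := @tmean_scale _ _ _ f mA_midpoint 0 n.+1 _ (mass_munit i); rewrite add0n => ->.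
  by apply: tmean0; rewrite ?mass_munit // /munit eqxx.
have := h_mid_dyadic mass_l (vertex i).
rewrite vertexE eval_l; case: (simplex_is_midpoint_set n) => -> _ fixed.
by apply: (@mA_cancel (h (vertex i))); rewrite mAxx {1}fixed mAC.
Qed.

End Recursion.

Lemma hom_dyadic_point phi : midpoint_hom (@simplex_mid n) mA phi ->
  (forall i, phi (vertex i) = f i) ->
  forall N l (mass_l : mass l = (2 ^ N)%N), phi (dyadic_point mass_l) = tmean mA f N l.
Proof.
move=> phi_hom phi_vertex; elim=> [|N IH] l mass_l.
  have [x pos_x] : exists x : 'I_n.+1, (0 < l x)%N by apply: mass_gt0_exists; rewrite mass_l.
  rewrite (tmean0 _ _ mass_l pos_x) -phi_vertex; congr phi; apply: simplex_ext => i /=.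
  by rewrite -dyadic_munit /dyadic (mass1_munit mass_l pos_x).
have [mass_take mass_drop] := mass_halves mass_l.
have -> : dyadic_point mass_l = simplex_mid (dyadic_point mass_take) (dyadic_point mass_drop).
  apply: simplex_ext => i /=; rewrite (congr1 (@^~ i) (dyadic_mid n N _ _)) /dyadic /madd.
  by rewrite /mdrop addnC subnK ?mtake_le.
by rewrite phi_hom !IH.
Qed.

End Freeness.

Theorem mainTheorem14 (n : nat) :
  m_convex_body (@simplex_mid n) /\
  (forall (A : Type) (mA : A -> A -> A), m_convex_body mA ->
   forall f : 'I_n.+1 -> A,
   exists! h : simplex n -> A,
     midpoint_hom (@simplex_mid n) mA h /\ (forall i, h (vertex i) = f i)).
Proof.
split=> [|A mA mA_body f]; first exact: simplex_m_convex_body.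
have [mA_midpoint [_ mA_iter]] := mA_body.
have [h [h_rec h_unique]] :=
  mA_iter (simplex n) (fun w => dyadic_eval mA f (sval (digit w))) (@rest n).
have {}h_rec w : h w = mA (dyadic_eval mA f (sval (digit w))) (h (rest w)) := h_rec w.
exists h; split.
  split; first exact: (h_hom mA_body h_rec).
  exact: (h_vertex mA_body h_rec).
move=> phi [phi_hom phi_vertex]; apply: h_unique => w.
rewrite -{1}(digit_rest_mid w) phi_hom (hom_dyadic_point phi_hom phi_vertex).
by rewrite dyadic_evalE // mass_digit_counts.
Qed.
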